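(* Let $I$ be an ideal on a cardinal $\kappa$ and let $\theta<\kappa$ be a regular cardinal. The following are equivalent: (1) $I$ is weakly $\theta$-saturated and $\theta$-indecomposable. (2) Whenever $\langle B_i:i<\theta\rangle$ is a $\subseteq$-increasing sequence of subsets of $\kappa$, there is $i^*<\theta$ such that $B_i=_I\bigcup_{j<\theta}B_j$ for all $i$ with $i^*\leq i<\theta$. (3) Whenever $\langle A_i:i<\theta\rangle$ is a sequence of $I$-positive subsets of $\kappa$, we have $\bigcap_{i<\theta}\bigcup_{i\leq j<\theta}A_j\neq\emptyset$. (4) If $\langle S_\alpha:\alpha<\kappa\rangle$ is a sequence of sets of ordinals with $|S_\alpha|<\theta$ for all $\alpha$, then every sequence $\langle h_i:i<\theta\rangle$ of functions in $\prod_{\alpha<\kappa}S_\alpha$ that is increasing in the pointwise order ($i<j$ implies $h_i(\alpha)\leq h_j(\alpha)$ for all $\alpha$) is eventually constant modulo $I$, i.e. there is $i^*<\theta$ with $h_i=_I h_{i^*}$ for all $i\geq i^*$. (5) Every function $f:\kappa\to\theta$ is bounded below $\theta$ almost everywhere, i.e. there is $\beta<\theta$ with $\{\alpha<\kappa: f(\alpha)\geq\beta\}\in I$.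
   Context: By an ideal on a cardinal $\kappa$ we mean a proper ideal on $\kappa$ containing all bounded subsets of $\kappa$. A set is $I$-positive if it is not in $I$. $A=_I B$ means $A\setminus B\in I$ and $B\setminus A\in I$; for functions, $f=_I g$ means $\{\alpha:f(\alpha)\neq g(\alpha)\}\in I$. $I$ is weakly $\theta$-saturated if there is no partition of $\kappa$ into $\theta$ pairwise disjoint $I$-positive sets. $I$ is $\theta$-indecomposable if whenever $\langle A_i:i<\theta\rangle$ are subsets of $\kappa$ with $\bigcup_{i<\theta}A_i\notin I$, there is $w\subseteq\theta$ with $|w|<\theta$ and $\bigcup_{i\in w}A_i\notin I$. *)

(* Cardinals/ordinals are represented by well-ordered types. *)
From Stdlib Require Import Classical.

Set Implicit Arguments.

Definition card_le (A B : Type) : Prop := exists f : A -> B, forall x y, f x = f y -> x = y.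
Definition card_lt (A B : Type) : Prop := card_le A B /\ ~ card_le B A.

Definition setT_of (X : Type) (S : X -> Prop) : Type := { x : X | S x }.

Definition is_wellorder (X : Type) (lt : X -> X -> Prop) : Prop :=
  (forall x, ~ lt x x) /\
  (forall x y z, lt x y -> lt y z -> lt x z) /\
  (forall x y, lt x y \/ x = y \/ lt y x) /\
  well_founded lt.

Definition leo (X : Type) (lt : X -> X -> Prop) (x y : X) : Prop := lt x y \/ x = y.

(* A cardinal = an initial ordinal: a well-order each of whose proper initial
   segments has strictly smaller cardinality than the whole. *)
Definition is_cardinal (X : Type) (lt : X -> X -> Prop) : Prop :=
  is_wellorder lt /\
  forall a : X, ~ card_le X (setT_of (fun y => lt y a)).

Definition is_regular (X : Type) (lt : X -> X -> Prop) : Prop :=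
  is_cardinal lt /\ card_le nat X /\
  forall C : X -> Prop, (forall x, exists y, C y /\ leo lt x y) ->
     card_le X (setT_of C).

Definition is_ideal (K : Type) (ltK : K -> K -> Prop) (I : (K -> Prop) -> Prop) : Prop :=
  I (fun _ => False) /\
  ~ I (fun _ => True) /\
  (forall A B : K -> Prop, (forall x, A x -> B x) -> I B -> I A) /\
  (forall A B : K -> Prop, I A -> I B -> I (fun x => A x \/ B x)) /\
  (forall (A : K -> Prop) (a : K), (forall x, A x -> ltK x a) -> I A).

Definition positive (K : Type) (I : (K -> Prop) -> Prop) (A : K -> Prop) : Prop := ~ I A.

Definition eq_mod (K : Type) (I : (K -> Prop) -> Prop) (A B : K -> Prop) : Prop :=
  I (fun x => A x /\ ~ B x) /\ I (fun x => B x /\ ~ A x).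

Definition weakly_saturated (K T : Type) (I : (K -> Prop) -> Prop) : Prop :=
  ~ exists P : T -> (K -> Prop),
      (forall i, positive I (P i)) /\
      (forall i j x, i <> j -> P i x -> P j x -> False) /\
      (forall x, exists i, P i x).

Definition indecomposable (K T : Type) (I : (K -> Prop) -> Prop) : Prop :=
  forall A : T -> (K -> Prop),
    ~ I (fun x => exists i, A i x) ->
    exists w : T -> Prop, card_lt (setT_of w) T /\
                          ~ I (fun x => exists i, w i /\ A i x).

(* Everything is compared with (5).  The easy directions choose, for each
   point, a witness index and bound it mod I.  For (1) => (5): if some
   f : kappa -> theta is unbounded mod I, every tail f^-1[b, theta) is
   positive, and indecomposability cuts from it a positive slice
   f^-1[b, c).  Stacking such slices above one another by transfinite
   recursion along theta (regularity keeps each stage bounded) yields theta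
   pairwise disjoint positive sets, contradicting weak saturation. *)
From Stdlib Require Import Classical ClassicalEpsilon
  ProofIrrelevance FunctionalExtensionality Setoid.
Set Implicit Arguments.

Lemma card_le_trans (A B C : Type) : card_le A B -> card_le B C -> card_le A C.
Proof. intros [f Hf] [g Hg]. exists (fun x => g (f x)). auto. Qed.

Lemma card_le_subtype (A : Type) (P : A -> Prop) : card_le (setT_of P) A.
Proof.
  exists (@proj1_sig _ _). intros [x Hx] [y Hy] E; simpl in E; subst.
  f_equal; apply proof_irrelevance.
Qed.

Lemma card_le_incl (A : Type) (P Q : A -> Prop) :
  (forall x, P x -> Q x) -> card_le (setT_of P) (setT_of Q).
Proof.
  intro H. exists (fun p => exist Q (proj1_sig p) (H _ (proj2_sig p))).
  intros [x Hx] [y Hy] E. injection E; intro; subst.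
  f_equal; apply proof_irrelevance.
Qed.

Lemma card_le_image (A B : Type) (P : A -> Prop) (F : A -> B) :
  card_le (setT_of (fun y => exists x, P x /\ y = F x)) (setT_of P).
Proof.
  destruct (choice
    (fun (y : setT_of (fun y => exists x, P x /\ y = F x)) (x : setT_of P) =>
       proj1_sig y = F (proj1_sig x))) as [k Hk].
  { intros [y [x [Px ->]]]. exists (exist _ x Px). reflexivity. }
  exists k. intros [y Py] [z Pz] E.
  assert (y = z) as <-.
  { pose proof (Hk (exist _ y Py)) as Hy; pose proof (Hk (exist _ z Pz)) as Hz.
    simpl in Hy, Hz. rewrite Hy, Hz, E. reflexivity. }
  f_equal; apply proof_irrelevance.
Qed.

Section WellOrder.
Variables (X : Type) (lt : X -> X -> Prop).
Hypothesis Hwo : is_wellorder lt.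

Lemma wo_irrefl x : ~ lt x x.
Proof. apply Hwo. Qed.

Lemma wo_total x y : lt x y \/ x = y \/ lt y x.
Proof. apply Hwo. Qed.

Lemma leo_refl x : leo lt x x.
Proof. right; reflexivity. Qed.

Lemma wo_lt_leo_trans x y z : lt x y -> leo lt y z -> lt x z.
Proof. intros h [h'|<-]; [apply (proj1 (proj2 Hwo)) with y|]; auto. Qed.

Lemma wo_leo_lt_trans x y z : leo lt x y -> lt y z -> lt x z.
Proof. intros [h| ->] h'; [apply (proj1 (proj2 Hwo)) with y|]; auto. Qed.

Lemma wo_leo_trans x y z : leo lt x y -> leo lt y z -> leo lt x z.
Proof. intros [h| ->] h'; [left; apply wo_lt_leo_trans with y|]; auto. Qed.

Lemma wo_not_lt_leo x y : ~ lt x y -> leo lt y x.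
Proof. intro h. destruct (wo_total x y) as [a|[->|a]]; [contradiction|apply leo_refl|left; auto]. Qed.

Lemma wo_leo_not_lt x y : leo lt x y -> ~ lt y x.
Proof. intros h h'. apply (@wo_irrefl x). apply wo_leo_lt_trans with y; auto. Qed.

Lemma wo_leo_antisym x y : leo lt x y -> leo lt y x -> x = y.
Proof. intros [h|h] h'; auto. exfalso. exact (wo_leo_not_lt h' h). Qed.

Definition truncate (c i : X) : X :=
  if excluded_middle_informative (lt i c) then i else c.

Lemma truncate_leo c i : leo lt (truncate c i) c.
Proof. unfold truncate. destruct excluded_middle_informative; [left; auto|apply leo_refl]. Qed.

Lemma truncate_id c i : leo lt i c -> truncate c i = i.
Proof. unfold truncate. destruct excluded_middle_informative; [|intros [l| ->]]; tauto. Qed.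

Lemma truncate_above c i : leo lt c i -> truncate c i = c.
Proof.
  intro h. unfold truncate. destruct excluded_middle_informative as [l|]; auto.
  exfalso. exact (wo_leo_not_lt h l).
Qed.

Lemma truncate_monotone c i j : lt i j -> leo lt (truncate c i) (truncate c j).
Proof.
  intro l. destruct (classic (lt j c)) as [jc|jc].
  - rewrite !truncate_id; [left; auto|left; auto|left; apply wo_lt_leo_trans with j; [auto|left; auto]].
  - rewrite (truncate_above (wo_not_lt_leo jc)). apply truncate_leo.
Qed.

End WellOrder.

Section Regular.
Variables (T : Type) (ltT : T -> T -> Prop).
Hypothesis HT : is_regular ltT.

Lemma regular_wellorder : is_wellorder ltT.
Proof. apply HT. Qed.

Lemma regular_inhabited : inhabited T.
Proof. destruct HT as [_ [[e _] _]]. exact (inhabits (e 0)). Qed.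

Lemma segment_small t : ~ card_le T (setT_of (fun y => ltT y t)).
Proof. apply HT. Qed.

Lemma small_bounded (P : T -> Prop) :
  ~ card_le T (setT_of P) -> exists u, forall y, P y -> leo ltT y u.
Proof.
  intro H. apply NNPP; intro Hn. apply H, HT. intro x.
  apply NNPP; intro Hm. apply Hn. exists x. intros y Py.
  apply (wo_not_lt_leo regular_wellorder). intro h. apply Hm. exists y. split; [|left]; auto.
Qed.

(* A maximum would make the singleton cofinal, yet T is infinite. *)
Lemma regular_unbounded x : exists y, ltT x y.
Proof.
  apply NNPP; intro Hn.
  destruct HT as [_ [[e He] Hcof]].
  destruct (Hcof (fun y => y = x)) as [g Hg].
  { intro z. exists x. split; auto.
    apply (wo_not_lt_leo regular_wellorder). intro h; apply Hn; eauto. }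
  assert (E : g (e 0) = g (e 1)).
  { destruct (g (e 0)) as [a Ha], (g (e 1)) as [b Hb]. subst. f_equal; apply proof_irrelevance. }
  apply Hg, He in E. discriminate.
Qed.

Lemma closed_segment_small t : card_lt (setT_of (fun y => leo ltT y t)) T.
Proof.
  split; [apply card_le_subtype|]. intro Hle.
  destruct (regular_unbounded t) as [s Hs]. apply (segment_small (t:=s)).
  apply card_le_trans with (1 := Hle), card_le_incl.
  intros y Hy. apply (wo_leo_lt_trans regular_wellorder) with t; auto.
Qed.

Lemma image_bounded (B : Type) (P : B -> Prop) (F : B -> T) :
  ~ card_le T (setT_of P) -> exists u, forall x, P x -> leo ltT (F x) u.
Proof.
  intro H. destruct (@small_bounded (fun y => exists x, P x /\ y = F x)) as [u Hu].
  - intro Hle. apply H, card_le_trans with (1 := Hle), card_le_image.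
  - exists u. intros x Px. apply Hu. eauto.
Qed.

(* Pick a stage at which each value is attained; regularity bounds these stages. *)
Lemma monotone_eventually_constant (O : Type) (ltO : O -> O -> Prop)
  (HO : is_wellorder ltO) (S : O -> Prop) (h : T -> O) :
  card_lt (setT_of S) T -> (forall i, S (h i)) ->
  (forall i j, ltT i j -> leo ltO (h i) (h j)) ->
  exists g, forall i, leo ltT g i -> h i = h g.
Proof.
  intros [_ HS] HhS Hmono.
  assert (Hmono' : forall i j, leo ltT i j -> leo ltO (h i) (h j))
    by (intros i j [l| ->]; [auto|apply leo_refl]).
  set (stage v := epsilon regular_inhabited (fun i => h i = v)).
  assert (Hstage : forall i, h (stage (h i)) = h i)
    by (intro i; apply (epsilon_spec regular_inhabited (fun k => h k = h i)); eauto).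
  destruct (@image_bounded _ (fun v => exists i, h i = v) stage) as [g Hg].
  { intro Hle. apply HS, card_le_trans with (1 := Hle), card_le_incl.
    intros v [i <-]. apply HhS. }
  exists g. intros i Hi. apply (wo_leo_antisym HO); [|apply Hmono'; auto].
  rewrite <- Hstage. apply Hmono', Hg. eauto.
Qed.

(* Transfinite recursion [F t = g (sup_{s<t} F s)], with an arbitrary bound
   [u t] of the earlier values in place of the supremum. *)
Lemma transfinite_stack (g : T -> T) :
  exists F u : T -> T,
    forall t, F t = g (u t) /\ forall s, ltT s t -> leo ltT (F s) (u t).
Proof.
  set (ub P := epsilon regular_inhabited (fun u => forall y, P y -> leo ltT y u)).
  set (step t (rec : forall s, ltT s t -> T) :=
         g (ub (fun y => exists s (H : ltT s t), y = rec s H))).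
  set (F := Fix (proj2 (proj2 (proj2 regular_wellorder))) (fun _ => T) step).
  exists F, (fun t => ub (fun y => exists s (H : ltT s t), y = F s)). intro t. split.
  - unfold F. rewrite Fix_eq; [reflexivity|]. intros x f1 f2 Hext.
    replace f2 with f1; [reflexivity|].
    apply functional_extensionality_dep; intro; apply functional_extensionality_dep; auto.
  - intros s Hst.
    apply (epsilon_spec regular_inhabited
             (fun u => forall y, (exists s (H : ltT s t), y = F s) -> leo ltT y u)).
    2: exists s, Hst; reflexivity.
    destruct (@image_bounded _ (fun s => ltT s t) F (segment_small (t:=t))) as [u Hu].
    exists u. intros y [s' [H' ->]]. auto.
Qed.

End Regular.

Section Ideal.
Variables (K : Type) (ltK : K -> K -> Prop) (I : (K -> Prop) -> Prop).
Hypothesis HI : is_ideal ltK I.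

Lemma ideal_empty : I (fun _ => False).
Proof. apply HI. Qed.

Lemma ideal_mono (A B : K -> Prop) : (forall x, A x -> B x) -> I B -> I A.
Proof. apply HI. Qed.

Lemma ideal_union (A B : K -> Prop) : I A -> I B -> I (fun x => A x \/ B x).
Proof. apply HI. Qed.

End Ideal.

Definition bounded_mod (K T : Type) (ltT : T -> T -> Prop) (I : (K -> Prop) -> Prop) :=
  forall f : K -> T, exists beta : T, I (fun a => leo ltT beta (f a)).

Definition chains_stabilize (K T : Type) (ltT : T -> T -> Prop) (I : (K -> Prop) -> Prop) :=
  forall B : T -> (K -> Prop),
    (forall i j x, leo ltT i j -> B i x -> B j x) ->
    exists istar : T, forall i, leo ltT istar i ->
      eq_mod I (B i) (fun x => exists j, B j x).

Definition positive_limsup_nonempty (K T : Type) (ltT : T -> T -> Prop)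
  (I : (K -> Prop) -> Prop) :=
  forall A : T -> (K -> Prop),
    (forall i, positive I (A i)) ->
    exists x : K, forall i, exists j, leo ltT i j /\ A j x.

Definition monotone_sequences_stabilize (K T : Type) (ltT : T -> T -> Prop)
  (I : (K -> Prop) -> Prop) :=
  forall (O : Type) (ltO : O -> O -> Prop), is_wellorder ltO ->
    forall S : K -> (O -> Prop),
    (forall a, card_lt (setT_of (S a)) T) ->
    forall h : T -> K -> O,
    (forall i a, S a (h i a)) ->
    (forall i j a, ltT i j -> leo ltO (h i a) (h j a)) ->
    exists istar : T, forall i, leo ltT istar i ->
      I (fun a => h i a <> h istar a).

Section Equivalences.
Variables (K : Type) (ltK : K -> K -> Prop) (I : (K -> Prop) -> Prop).
Variables (T : Type) (ltT : T -> T -> Prop).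
Hypotheses (HI : is_ideal ltK I) (HT : is_regular ltT).

Let HW := regular_wellorder HT.

(* The points outside every member of the family go into one of its pieces. *)
Lemma weakly_saturated_disjoint (P : T -> (K -> Prop)) :
  weakly_saturated T I -> (forall i, positive I (P i)) ->
  (forall i j x, i <> j -> P i x -> P j x -> False) -> False.
Proof.
  intros WS Hpos Hdis. destruct (regular_inhabited HT) as [t0].
  set (rest a := ~ exists t, t <> t0 /\ P t a).
  apply WS. exists (fun t a => (t = t0 /\ rest a) \/ (t <> t0 /\ P t a)). split; [|split].
  - intros t Ht. apply (Hpos t). apply (ideal_mono HI) with (2 := Ht).
    intros a Pa. destruct (classic (t = t0)) as [->|n]; [left|right]; auto.
    split; auto. intros [t' [n' Pt']]. exact (Hdis _ _ _ n' Pt' Pa).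
  - intros i j a nij [[-> ri]|[ni Pi]] [[-> rj]|[nj Pj]]; eauto.
  - intro a. destruct (classic (rest a)) as [r|r].
    + exists t0. left; auto.
    + apply NNPP in r. destruct r as [t [n Pt]]. exists t. right; auto.
Qed.

Lemma indecomposable_bounded_part (f : K -> T) (A : K -> Prop) :
  indecomposable T I -> positive I A ->
  exists c, positive I (fun a => A a /\ ltT (f a) c).
Proof.
  intros IND HA. destruct (IND (fun i a => A a /\ f a = i)) as [w [[_ Hw] Hwpos]].
  { intro Hu. apply HA, (ideal_mono HI) with (2 := Hu). eauto. }
  destruct (small_bounded HT Hw) as [d Hd]. destruct (regular_unbounded HT d) as [c Hc].
  exists c. intro Hc'. apply Hwpos, (ideal_mono HI) with (2 := Hc').
  intros a [i [wi [Aa <-]]]. split; auto. apply (wo_leo_lt_trans HW) with d; auto.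
Qed.

Lemma saturated_indecomposable_bounded_mod :
  weakly_saturated T I /\ indecomposable T I -> bounded_mod ltT I.
Proof.
  intros [WS IND] f. apply NNPP; intro Hn.
  assert (Htail : forall b, positive I (fun a => leo ltT b (f a))) by (intros b Hb; eauto).
  destruct (choice _ (fun b => indecomposable_bounded_part f IND (Htail b)))
    as [g Hg].
  destruct (transfinite_stack HT g) as [F [u HFu]].
  apply (weakly_saturated_disjoint (fun t a => leo ltT (u t) (f a) /\ ltT (f a) (F t)) WS).
  - intro t. rewrite (proj1 (HFu t)). apply Hg.
  - assert (below : forall s t a, ltT s t -> ltT (f a) (F s) -> leo ltT (u t) (f a) -> False).
    { intros s t a l h1 h2. apply (@wo_irrefl _ _ HW (f a)).
      apply (wo_lt_leo_trans HW) with (1 := h1), (wo_leo_trans HW) with (2 := h2).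
      apply HFu; auto. }
    intros i j a nij [hi1 hi2] [hj1 hj2].
    destruct (wo_total HW i j) as [l|[l|l]]; [eapply below; eauto|contradiction|eapply below; eauto].
Qed.

Lemma bounded_mod_saturated_indecomposable :
  bounded_mod ltT I -> weakly_saturated T I /\ indecomposable T I.
Proof.
  intro H5. destruct (regular_inhabited HT) as [t0]. split.
  - intros [P [Hpos [Hdis Hcov]]].
    destruct (choice _ Hcov) as [f Hf]. destruct (H5 f) as [b Hb].
    apply (Hpos b), (ideal_mono HI) with (2 := Hb). intros a Pa.
    destruct (classic (b = f a)) as [->|n]; [apply leo_refl|].
    exfalso; exact (Hdis _ _ _ n Pa (Hf a)).
  - intros A HA.
    set (f a := epsilon (inhabits t0) (fun i => A i a)).
    destruct (H5 f) as [b Hb].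
    exists (fun i => ltT i b). split; [split; [apply card_le_subtype|apply (segment_small HT)]|].
    intro Hw. apply HA, (ideal_mono HI) with (2 := ideal_union HI _ _ Hw Hb).
    intros a Ha. pose proof (epsilon_spec (inhabits t0) (fun i => A i a) Ha) as Hf.
    destruct (classic (ltT (f a) b)); [left; exists (f a)|right; apply (wo_not_lt_leo HW)]; auto.
Qed.

Lemma bounded_mod_iff_chains_stabilize : bounded_mod ltT I <-> chains_stabilize ltT I.
Proof.
  split.
  - intros H5 B HB. destruct (regular_inhabited HT) as [t0].
    set (f a := epsilon (inhabits t0) (fun i => B i a)).
    destruct (H5 f) as [b Hb]. exists b. intros i Hi. split.
    + apply (ideal_mono HI) with (2 := ideal_empty HI). intros x [Bx nU]. eauto.
    + apply (ideal_mono HI) with (2 := Hb). intros x [Ux nB].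
      pose proof (epsilon_spec (inhabits t0) (fun i => B i x) Ux) as Hf.
      left. apply (wo_leo_lt_trans HW) with i; auto.
      apply NNPP; intro n. apply nB, HB with (f x); auto. apply (wo_not_lt_leo HW); auto.
  - intros H2 f. destruct (H2 (fun i a => ltT (f a) i)) as [b Hb].
    { intros i j x l h. apply (wo_lt_leo_trans HW) with i; auto. }
    exists b. apply (ideal_mono HI) with (2 := proj2 (Hb b (leo_refl _ _))).
    intros a l. split; [apply (regular_unbounded HT)|apply (wo_leo_not_lt HW); auto].
Qed.

Lemma bounded_mod_iff_positive_limsup_nonempty :
  bounded_mod ltT I <-> positive_limsup_nonempty ltT I.
Proof.
  split.
  - intros H5 A HA. apply NNPP; intro Hn.
    assert (Hc : forall x, exists i, forall j, leo ltT i j -> ~ A j x).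
    { intro x. apply NNPP; intro Hm. apply Hn. exists x. intro i.
      apply NNPP; intro Hk. apply Hm. exists i. intros j Hj Aj. apply Hk; eauto. }
    destruct (choice _ Hc) as [f Hf]. destruct (H5 f) as [b Hb].
    apply (HA b), (ideal_mono HI) with (2 := Hb). intros a Aa.
    apply (wo_not_lt_leo HW). intro l. exact (Hf a b (or_introl l) Aa).
  - intros H3 f. apply NNPP; intro Hn.
    destruct (H3 (fun i a => leo ltT i (f a))) as [x Hx]; [intros i Hi; eauto|].
    destruct (regular_unbounded HT (f x)) as [i Hi]. destruct (Hx i) as [j [h1 h2]].
    apply (@wo_irrefl _ _ HW (f x)), (wo_lt_leo_trans HW) with (1 := Hi), (wo_leo_trans HW) with j; auto.
Qed.

Lemma bounded_mod_monotone_sequences_stabilize :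
  bounded_mod ltT I -> monotone_sequences_stabilize ltT I.
Proof.
  intros H5 O ltO HO S HS h HhS Hmono.
  destruct (choice _ (fun a =>
      monotone_eventually_constant HT HO (fun i => h i a) (HS a)
        (fun i => HhS i a) (fun i j l => Hmono i j a l))) as [G HG].
  destruct (H5 G) as [b Hb]. exists b. intros i Hi.
  apply (ideal_mono HI) with (2 := Hb). intros a Ha.
  apply (wo_not_lt_leo HW). intro l. apply Ha.
  rewrite (HG a i), (HG a b); [reflexivity|left; auto|].
  apply (wo_leo_trans HW) with b; [left|]; auto.
Qed.

(* Apply (4) to the truncations [i |-> min(i, f a)], which move at [a] until
   they reach [f a]. *)
Lemma monotone_sequences_stabilize_bounded_mod :
  monotone_sequences_stabilize ltT I -> bounded_mod ltT I.
Proof.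
  intros H4 f.
  destruct (H4 T ltT HW (fun a y => leo ltT y (f a)) (fun a => closed_segment_small HT (f a))
              (fun i a => truncate ltT (f a) i) (fun i a => truncate_leo ltT (f a) i)
              (fun i j a l => truncate_monotone HW (f a) i j l)) as [s Hs].
  destruct (regular_unbounded HT s) as [b Hb]. exists b.
  apply (ideal_mono HI) with (2 := Hs b (or_introl Hb)). intros a l.
  rewrite (truncate_id l), (@truncate_id _ ltT); [|left; apply (wo_lt_leo_trans HW) with b; auto].
  intros ->. exact (@wo_irrefl _ _ HW s Hb).
Qed.

End Equivalences.

Theorem theorem2p6
  (K : Type) (ltK : K -> K -> Prop) (HK : is_cardinal ltK)
  (T : Type) (ltT : T -> T -> Prop) (HT : is_regular ltT)
  (HTK : card_lt T K)
  (I : (K -> Prop) -> Prop) (HI : is_ideal ltK I) :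
  let c1 := weakly_saturated T I /\ indecomposable T I in
  let c2 := forall B : T -> (K -> Prop),
      (forall i j x, leo ltT i j -> B i x -> B j x) ->
      exists istar : T, forall i, leo ltT istar i ->
        eq_mod I (B i) (fun x => exists j, B j x) in
  let c3 := forall A : T -> (K -> Prop),
      (forall i, positive I (A i)) ->
      exists x : K, forall i, exists j, leo ltT i j /\ A j x in
  let c4 := forall (O : Type) (ltO : O -> O -> Prop), is_wellorder ltO ->
      forall S : K -> (O -> Prop),
      (forall a, card_lt (setT_of (S a)) T) ->
      forall h : T -> K -> O,
      (forall i a, S a (h i a)) ->
      (forall i j a, ltT i j -> leo ltO (h i a) (h j a)) ->
      exists istar : T, forall i, leo ltT istar i ->
        I (fun a => h i a <> h istar a) in
  let c5 := forall f : K -> T,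
      exists beta : T, I (fun a => leo ltT beta (f a)) in
  (c1 <-> c2) /\ (c1 <-> c3) /\ (c1 <-> c4) /\ (c1 <-> c5).
Proof.
  cbv zeta.
  assert (c15 : weakly_saturated T I /\ indecomposable T I <-> bounded_mod ltT I).
  { split; [exact (saturated_indecomposable_bounded_mod HI HT)|
            exact (bounded_mod_saturated_indecomposable HI HT)]. }
  rewrite c15. split; [|split; [|split]].
  - exact (bounded_mod_iff_chains_stabilize HI HT).
  - exact (bounded_mod_iff_positive_limsup_nonempty HI HT).
  - split; [exact (bounded_mod_monotone_sequences_stabilize HI HT)|
            exact (monotone_sequences_stabilize_bounded_mod HI HT)].
  - reflexivity.
Qed.
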